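(* If $2 \leq a \leq b$ are integers, then $a^{b-1} \cdot b^{a-1} \geq P_a(a+b-1) \cdot P_b(a+b-1)$.
   Context: $P_k(m)$ denotes the number of integer partitions of $m$ into exactly $k$ positive parts. *)

From mathcomp Require Import all_boot.
Unset Printing Implicit Defensive.

(* A partition of m into exactly k positive parts, represented as its
   nonincreasing list of parts (p_1 >= ... >= p_k >= 1, sum = m).
   Parts are at most m, so we enumerate k-tuples over 'I_(m.+1). *)
Definition is_partition_k (m k : nat) (t : k.-tuple 'I_m.+1) : bool :=
  [&& sorted geq (map val t), all (fun x : 'I_m.+1 => 0 < val x) t
    & sumn (map val t) == m].

Definition P (k m : nat) : nat := #|[set t : k.-tuple 'I_m.+1 | @is_partition_k m k t]|.

From mathcomp Require Import all_boot.

(* Subtracting 1 from each part turns a partition of m into k parts into a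
   weak composition (c_1, ..., c_k) of m - k, and distinct partitions give
   distinct compositions.  A weak composition of n into k parts is in turn
   determined by the word of length n over the alphabet {1, ..., k} in which
   the letter i occurs c_i times in a row, so there are at most k^(m-k) of
   them. *)

Definition blocks {k} (c : k.-tuple nat) : seq 'I_k :=
  flatten [seq nseq (tnth c i) i | i <- enum 'I_k].

Lemma size_blocks k (c : k.-tuple nat) : size (blocks c) = sumn c.
Proof.
rewrite size_flatten /shape -map_comp -[in RHS](map_tnth_enum c).
by congr sumn; apply: eq_map => i /=; rewrite size_nseq.
Qed.

Lemma count_mem_blocks k (c : k.-tuple nat) i : count_mem i (blocks c) = tnth c i.
Proof.
rewrite count_flatten -map_comp sumnE big_map big_enum /=.
rewrite (eq_bigr (fun j => if j == i then tnth c j else 0)); last first.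
  by move=> j _; rewrite /= count_nseq /= eq_sym; case: eqP; rewrite ?mul1n.
by rewrite -big_mkcond big_pred1_eq.
Qed.

Lemma blocks_inj k : injective (@blocks k).
Proof. by move=> c1 c2 e; apply: eq_from_tnth => i; rewrite -!count_mem_blocks e. Qed.

Lemma card_weak_compositions_le (T : finType) (A : {pred T}) k n
    (c : T -> k.+1.-tuple nat) :
  {in A &, injective c} -> {in A, forall t, sumn (c t) = n} ->
  #|A| <= k.+1 ^ n.
Proof.
move=> c_inj c_sum.
pose code t : {ffun 'I_n -> 'I_k.+1} := [ffun j : 'I_n => nth ord0 (blocks (c t)) j].
have code_inj : {in A &, injective code}.
  move=> t1 t2 A1 A2 e; apply: c_inj => //; apply: blocks_inj.
  apply: (eq_from_nth (x0 := ord0)) => [|j]; first by rewrite !size_blocks !c_sum.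
  rewrite size_blocks c_sum // => ltjn.
  by have := congr1 (fun f : {ffun _ -> _} => f (Ordinal ltjn)) e; rewrite !ffunE.
rewrite -(card_in_imset code_inj); apply: leq_trans (max_card _) _.
by rewrite card_ffun !card_ord.
Qed.

Lemma sumn_predn (s : seq nat) : all (leq 1) s -> sumn (map predn s) + size s = sumn s.
Proof.
elim: s => //= x s IH /andP[x_gt0 /IH <-].
by rewrite addnS -!addSn prednK // addnA.
Qed.

Lemma P_le_exp k m : P k.+1 m <= k.+1 ^ (m - k.+1).
Proof.
apply: (@card_weak_compositions_le _ _ _ _ (fun t => map_tuple (predn \o val) t)).
- move=> t1 t2; rewrite !inE => /and3P[_ pos1 _] /and3P[_ pos2 _] e.
  apply: eq_from_tnth => i; apply: val_inj.
  have /prednK <- := allP pos1 _ (mem_tnth i t1).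
  have /prednK <- := allP pos2 _ (mem_tnth i t2).
  by have := congr1 (fun t => tnth t i) e; rewrite !tnth_map /= => ->.
- move=> t; rewrite inE => /and3P[_ pos /eqP sum_t] /=.
  rewrite -[in RHS]sum_t -(@sumn_predn (map val t)) ?all_map //.
  by rewrite size_map size_tuple map_comp addnK.
Qed.

Theorem corollary2p3p1 (a b : nat) :
  2 <= a -> a <= b ->
  P a (a + b - 1) * P b (a + b - 1) <= a ^ (b - 1) * b ^ (a - 1).
Proof.
case: a => [|k] // _; case: b => [|l] // _.
apply: leq_mul.
- by have := P_le_exp k (k.+1 + l.+1 - 1); rewrite subnAC addKn.
- by have := P_le_exp l (k.+1 + l.+1 - 1); rewrite subnAC addnK.
Qed.
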